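(* Let $H$ be a finite simple graph on vertex set $\{x_1,\dots,x_n\}$, let $\Bbbk$ be a field and $S=\Bbbk[x_1,\dots,x_n]$. Suppose $H$ has a perfect matching $M$ of cardinality $k+1$ which is $k$-admissable. Let $u_M=\prod_{e\in M}\prod_{x_i\in e}x_i$. Then the simplicial complex $K^{u_M}(I(H)^{[k]})$ is disconnected.
   Context: A perfect matching covers every vertex. $I(H)^{[k]}$ is the ideal of $S$ generated by the products $e_1\cdots e_k$ over all matchings $\{e_1,\dots,e_k\}$ of $H$ of size $k$ (edge $\{x_i,x_j\}$ identified with $x_ix_j$). For a monomial ideal $I$ and a monomial $x^\alpha$, the upper-Koszul simplicial complex $K^\alpha(I)$ on $\{x_1,\dots,x_n\}$ has as faces the subsets $W$ with $x^\alpha/\prod_{u\in W}u\in I$. A simplicial complex is connected if any two vertices are joined by a sequence of facets with consecutive facets intersecting. Two edges form a gap if they are disjoint and no edge of $H$ joins a vertex of one to a vertex of the other. A sequence $(a_1,\dots,a_n)$ of integers is $k$-admissable if $a_i\ge1$ and $\sum a_i\le n+k-1$. A matching $M$ is $k$-admissable if there are nonempty pairwise disjoint $M_1,\dots,M_r\subseteq M$ with union $M$ such that edges from different $M_i$'s always form a gap in $H$, $(|M_1|,\dots,|M_r|)$ is $k$-admissable, and the induced subgraph of $H$ on $\bigcup_{e\in M_i}e$ is a forest for each $i$. *)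

From HB Require Import structures.
From mathcomp Require Import all_boot all_order all_algebra.
From mathcomp Require Import mpoly.
Set Implicit Arguments. Unset Strict Implicit. Unset Printing Implicit Defensive.
Import GRing.Theory.
Local Open Scope ring_scope.

Definition simple_graph (n : nat) (adj : rel 'I_n) : Prop :=
  ssrbool.symmetric adj /\ ssrbool.irreflexive adj.

Definition is_edge (n : nat) (adj : rel 'I_n) (f : {set 'I_n}) : bool :=
  [exists i, exists j, adj i j && (f == [set i; j])].

Definition matching (n : nat) (adj : rel 'I_n) (M : {set {set 'I_n}}) : Prop :=
  (forall f, f \in M -> is_edge adj f) /\
  (forall f g, f \in M -> g \in M -> f != g -> [disjoint f & g]).

Definition perfect_matching (n : nat) (adj : rel 'I_n) (M : {set {set 'I_n}}) : Prop :=
  matching adj M /\ cover M = [set: 'I_n].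

Definition gap (n : nat) (adj : rel 'I_n) (f g : {set 'I_n}) : Prop :=
  [disjoint f & g] /\ (forall i j, i \in f -> j \in g -> ~~ adj i j).

Definition induced_forest (n : nat) (adj : rel 'I_n) (U : {set 'I_n}) : Prop :=
  forall c : seq 'I_n, uniq c -> (2 < size c)%N -> all (fun v => v \in U) c ->
    ~~ cycle adj c.

(* (a_1,...,a_r) is k-admissable iff a_i >= 1 and sum a_i <= r + k - 1 (stated as sum + 1 <= r + k to avoid truncated subtraction). *)
Definition admissable_seq (k : nat) (a : seq nat) : Prop :=
  all (fun x => (0 < x)%N) a /\ (sumn a + 1 <= size a + k)%N.

Definition admissable_matching (n : nat) (adj : rel 'I_n) (k : nat)
    (M : {set {set 'I_n}}) : Prop :=
  exists P : {set {set {set 'I_n}}},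
    partition P M /\
    (forall B1 B2, B1 \in P -> B2 \in P -> B1 != B2 ->
       forall f g, f \in B1 -> g \in B2 -> gap adj f g) /\
    admissable_seq k (map (fun B : {set {set 'I_n}} => #|B|) (enum P)) /\
    (forall B, B \in P -> induced_forest adj (cover B)).

Definition edge_monomial (K : fieldType) (n : nat) (M : {set {set 'I_n}})
    : {mpoly K[n]} :=
  \prod_(f in M) \prod_(i in f) 'X_i.
Arguments edge_monomial K {n} M.

Definition matching_gen (K : fieldType) (n : nat) (adj : rel 'I_n) (k : nat)
    (g : {mpoly K[n]}) : Prop :=
  exists M, matching adj M /\ #|M| = k /\ g = edge_monomial K M.
Arguments matching_gen K {n} adj k g.

Definition ideal_gen (K : fieldType) (n : nat) (G : {mpoly K[n]} -> Prop)
    (p : {mpoly K[n]}) : Prop :=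
  exists s : seq ({mpoly K[n]} * {mpoly K[n]}),
    (forall q, q \in s -> G q.2) /\ p = \sum_(q <- s) q.1 * q.2.

Definition squarefree_power_ideal (K : fieldType) (n : nat) (adj : rel 'I_n)
    (k : nat) : {mpoly K[n]} -> Prop :=
  ideal_gen (matching_gen K adj k).
Arguments squarefree_power_ideal K {n} adj k.

(* Upper-Koszul simplicial complex K^u(I): faces W with u / prod_{x in W} x in I
   (the quotient being a polynomial q with q * prod_{x in W} x = u). *)
Definition upper_koszul (K : fieldType) (n : nat) (I : {mpoly K[n]} -> Prop)
    (u : {mpoly K[n]}) (W : {set 'I_n}) : Prop :=
  exists q : {mpoly K[n]}, q * \prod_(i in W) 'X_i = u /\ I q.

Definition facet (n : nat) (D : {set 'I_n} -> Prop) (F : {set 'I_n}) : Prop :=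
  D F /\ (forall G, D G -> F \subset G -> G = F).

Definition sc_connected (n : nat) (D : {set 'I_n} -> Prop) : Prop :=
  forall v w : 'I_n, D [set v] -> D [set w] ->
    exists Fs : seq {set 'I_n},
      (forall F, F \in Fs -> facet D F) /\
      v \in head set0 Fs /\ w \in last set0 Fs /\
      (forall i, (i.+1 < size Fs)%N ->
         nth set0 Fs i :&: nth set0 Fs i.+1 != set0).

(* Let M_1, ..., M_r be the parts of the admissable partition of M. Since
   |M| = k + 1 and the sequence (|M_i|) is k-admissable, r >= 2. No edge of H
   leaves U := V(M_1), because edges of different parts form gaps and M covers
   every vertex. If a face W of K^{u_M}(I(H)^[k]) contained x in U and y
   outside U, then u_M / x_W would be divisible by the monomial of a k-matching
   N avoiding x and y. Every edge of N lies inside U or inside its complement,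
   both of even size, so N covers at most |U| - 2 vertices of U and at most
   n - |U| - 2 outside, i.e. 2k <= n - 4 = 2k - 2. Hence every face meeting U
   lies inside U, while vertices on both sides are faces: the complex is
   disconnected. *)
From HB Require Import structures.
From mathcomp Require Import all_boot all_order all_algebra.
From mathcomp Require Import mpoly.
From mathcomp Require Import zify.
Set Implicit Arguments. Unset Strict Implicit. Unset Printing Implicit Defensive.
Import GRing.Theory.
Local Open Scope ring_scope.

Lemma card_lt_subset_notin (T : finType) (A B : {set T}) x :
  A \subset B -> x \in B -> x \notin A -> (#|A| < #|B|)%N.
Proof. by move=> AB xB xA; apply/proper_card/properP; split=> //; exists x. Qed.

Section Graph.

Variables (n : nat) (adj : rel 'I_n).
Hypothesis adj_simple : simple_graph adj.

Lemma matching_trivIset (N : {set {set 'I_n}}) : matching adj N -> trivIset N.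
Proof. by case=> _ disjN; apply/trivIsetP => f g fN gN; apply: disjN. Qed.

Lemma card_edge (f : {set 'I_n}) : is_edge adj f -> #|f| = 2%N.
Proof.
case: adj_simple => _ irr /existsP[i /existsP[j /andP[ij /eqP ->]]].
have nij : i != j by apply: contraTneq ij => ->; rewrite irr.
by rewrite cards2 nij.
Qed.

Lemma card_cover_matching (N : {set {set 'I_n}}) :
  matching adj N -> #|cover N| = (2 * #|N|)%N.
Proof.
move=> matchN; have [edgeN _] := matchN; rewrite -(eqP (matching_trivIset matchN)).
rewrite (eq_bigr (fun _ => 2%N)) => [|f /edgeN /card_edge //].
by rewrite sum_nat_const mulnC.
Qed.

Lemma matchingS (N N' : {set {set 'I_n}}) :
  N' \subset N -> matching adj N -> matching adj N'.
Proof.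
move=> /subsetP subN [edgeN disjN]; split=> [f /subN/edgeN //|f g /subN fN /subN gN].
exact: disjN.
Qed.

Definition adj_closed (U : {set 'I_n}) : Prop :=
  forall i j, adj i j -> i \in U -> j \in U.

Lemma adj_closedC (U : {set 'I_n}) : adj_closed U -> adj_closed (~: U).
Proof.
case: adj_simple => sym _ closedU i j ij; rewrite !inE; apply: contra.
by apply: closedU; rewrite sym.
Qed.

Lemma edge_sub_closed (U f : {set 'I_n}) j :
  adj_closed U -> is_edge adj f -> j \in f -> j \in U -> f \subset U.
Proof.
case: adj_simple => sym _ closedU /existsP[i1 /existsP[i2 /andP[i12 /eqP ->]]].
rewrite !inE => /orP[] /eqP -> iU; apply/subsetP => y; rewrite !inE.
  by case/orP=> /eqP -> //; apply: closedU iU.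
by case/orP=> /eqP -> //; apply: closedU iU; rewrite sym.
Qed.

Lemma card_coverI_closed (N : {set {set 'I_n}}) (U : {set 'I_n}) :
  matching adj N -> adj_closed U ->
  #|cover N :&: U| = (2 * #|[set f in N | f \subset U]|)%N.
Proof.
move=> matchN closedU; have [edgeN _] := matchN; set NU := [set f in N | f \subset U].
have subNU : NU \subset N by apply/subsetP => f; rewrite inE => /andP[].
rewrite -(card_cover_matching (matchingS subNU matchN)); apply: eq_card => j.
rewrite inE; apply/andP/bigcupP => [[/bigcupP[f fN jf] jU]|].
  by exists f; rewrite // inE fN (edge_sub_closed closedU (edgeN f fN) jf jU).
case=> f; rewrite inE => /andP[fN fU] jf; split; last exact: subsetP fU j jf.
by apply/bigcupP; exists f.
Qed.

(* Each edge of N lies on one side of U, so N covers an even number of vertices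
   on each side; both sides have even size and N misses a vertex of each. *)
Lemma matching_avoid_closed_bound (N : {set {set 'I_n}}) (U : {set 'I_n}) x y :
  matching adj N -> adj_closed U -> ~~ odd #|U| -> ~~ odd n ->
  x \in U -> y \notin U -> x \notin cover N -> y \notin cover N ->
  (2 * #|N| + 4 <= n)%N.
Proof.
move=> matchN closedU evenU evenn xU yU xN yN.
have inU := card_coverI_closed matchN closedU.
have outU := card_coverI_closed matchN (adj_closedC closedU).
have ltU : (#|cover N :&: U| < #|U|)%N.
  by apply: (card_lt_subset_notin (x := x)); rewrite ?subsetIr // inE negb_and xN.
have ltC : (#|cover N :&: ~: U| < #|~: U|)%N.
  by apply: (card_lt_subset_notin (x := y)); rewrite ?subsetIr // !inE ?negb_and ?yN ?yU.
have splitN := cardsID U (cover N); rewrite setDE in splitN.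
have splitU := cardsC U; rewrite card_ord in splitU.
have coverN := card_cover_matching matchN.
lia.
Qed.

End Graph.

Definition mnm_set n (A : {set 'I_n}) : 'X_{1..n} := (\sum_(i in A) U_(i))%MM.

Lemma mnm_setE n (A : {set 'I_n}) j : mnm_set A j = (j \in A).
Proof.
rewrite /mnm_set mnm_sumE; case: (boolP (j \in A)) => jA.
  by rewrite (bigD1 j) //= mnm1E eqxx big1 // => i /andP[_ nij]; rewrite mnm1E (negbTE nij).
rewrite big1 // => i iA; have nij : i != j by apply: contraNneq jA => <-.
by rewrite mnm1E (negbTE nij).
Qed.

Lemma prod_mpolyX_set (K : fieldType) n (A : {set 'I_n}) :
  \prod_(i in A) ('X_i : {mpoly K[n]}) = 'X_[mnm_set A].
Proof. exact: mprodXE. Qed.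

Lemma edge_monomial_cover (K : fieldType) n (X : {set {set 'I_n}}) :
  trivIset X -> edge_monomial K X = 'X_[mnm_set (cover X)].
Proof. by move=> trivX; rewrite -prod_mpolyX_set /edge_monomial (big_trivIset _ trivX). Qed.

Lemma ideal_gen_mcoeff (K : fieldType) n (G : {mpoly K[n]} -> Prop) p r m :
  ideal_gen G p -> (p * r)@_m != 0 -> exists2 g, G g & exists c, (c * g * r)@_m != 0.
Proof.
case=> s [Gs ->]; rewrite big_distrl raddf_sum /= => nz.
have [x xs nzx] : exists2 x, x \in s & (x.1 * x.2 * r)@_m != 0.
  apply/hasP; apply: contraR nz => /hasPn nzs.
  by rewrite big_seq big1 // => x /nzs /negPn /eqP.
by exists x.2; [exact: Gs | exists x.1].
Qed.

Lemma mcoeffMX_neq0_lem n (K : fieldType) (c : {mpoly K[n]}) a m :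
  (c * 'X_[a])@_m != 0 -> (a <= m)%MM.
Proof.
rewrite -mcoeff_msupp (perm_mem (msuppMX _ _)) => /mapP[m' _ ->].
exact: lem_addr.
Qed.

Section UpperKoszul.

Variables (K : fieldType) (n : nat) (adj : rel 'I_n) (k : nat) (M : {set {set 'I_n}}).
Hypotheses (adj_simple : simple_graph adj) (M_perfect : perfect_matching adj M).
Hypothesis cardM : #|M| = k.+1.

Local Notation face := (upper_koszul (squarefree_power_ideal K adj k) (edge_monomial K M)).

Lemma edge_monomial_perfect : edge_monomial K M = 'X_[mnm_set [set: 'I_n]].
Proof.
by case: M_perfect => matchM <-; rewrite edge_monomial_cover ?(matching_trivIset matchM).
Qed.

(* Some term c * u_N * x_W of q * x_W has u_M in its support, so u_N * x_W
   divides the squarefree monomial u_M. *)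
Lemma face_avoiding_matching (W : {set 'I_n}) :
  face W -> exists N, [/\ matching adj N, #|N| = k & [disjoint cover N & W]].
Proof.
case=> q [qW Iq].
have : (q * \prod_(i in W) 'X_i)@_(mnm_set [set: 'I_n]) != 0.
  by rewrite qW edge_monomial_perfect mcoeffX eqxx oner_neq0.
case/(ideal_gen_mcoeff Iq) => _ [N [matchN [cardN ->]]] [c].
rewrite edge_monomial_cover ?(matching_trivIset matchN) // prod_mpolyX_set.
rewrite -mulrA -mpolyXD => /mcoeffMX_neq0_lem /mnm_lepP le1.
exists N; split=> //; apply/pred0P => j /=; apply/negbTE.
by move: (le1 j); rewrite mnmDE !mnm_setE inE; case: (j \in cover N); case: (j \in W).
Qed.

Lemma face_vertex (v : 'I_n) : face [set v].
Proof.
case: M_perfect => [[edgeM disjM] coverM].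
have /bigcupP[f fM vf] : v \in cover M by rewrite coverM inE.
exists ((\prod_(i in f :\ v) 'X_i) * edge_monomial K (M :\ f)); split.
  rewrite big_set1 /edge_monomial (big_setD1 _ fM) /= (big_setD1 _ vf) /=.
  by rewrite mulrC mulrA.
exists [:: (\prod_(i in f :\ v) 'X_i, edge_monomial K (M :\ f))].
split; last by rewrite big_seq1.
move=> _ /[1!inE] /eqP -> /=; exists (M :\ f); split=> //; last split=> //.
  by apply: matchingS (subsetDl M [set f]) _; split.
by move: cardM; rewrite (cardsD1 f M) fM => -[].
Qed.

Lemma face_sub_closed (U W : {set 'I_n}) x :
  adj_closed adj U -> ~~ odd #|U| -> face W -> x \in W -> x \in U -> W \subset U.
Proof.
move=> closedU evenU faceW xW xU; apply/subsetP => y yW; apply/negPn/negP => yU.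
have [N [matchN cardN disjNW]] := face_avoiding_matching faceW.
have cardn : n = (2 * k.+1)%N.
  case: M_perfect => matchM coverM.
  by rewrite -cardM -(card_cover_matching adj_simple matchM) coverM cardsT card_ord.
have evenn : ~~ odd n by rewrite cardn oddM.
have := matching_avoid_closed_bound adj_simple matchN closedU evenU evenn xU yU
  (negbT (disjointFl disjNW xW)) (negbT (disjointFl disjNW yW)).
lia.
Qed.

End UpperKoszul.

Lemma sc_disconnected n (D : {set 'I_n} -> Prop) (U : {set 'I_n}) v w :
  (forall W x, D W -> x \in W -> x \in U -> W \subset U) ->
  D [set v] -> D [set w] -> v \in U -> w \notin U -> ~ sc_connected D.
Proof.
move=> faceU Dv Dw vU wU /(_ v w Dv Dw) [Fs [facetFs [vFs [wFs meetFs]]]].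
have FsU i : (i < size Fs)%N -> nth set0 Fs i \subset U.
  have facet_i j : (j < size Fs)%N -> D (nth set0 Fs j) by move=> /(mem_nth set0) /facetFs [].
  elim: i => [|i IH] lti.
    by apply: (faceU _ v) (facet_i 0 lti) _ vU; rewrite nth0.
  have /set0Pn[x] := meetFs i lti; rewrite inE => /andP[xi xi1].
  exact: (faceU _ x) (facet_i _ lti) xi1 (subsetP (IH (ltnW lti)) x xi).
have Fs0 : (0 < size Fs)%N by case: Fs vFs {facetFs wFs meetFs FsU}; rewrite ?inE.
have /subsetP lastU : last set0 Fs \subset U by rewrite -nth_last FsU ?ltn_predL.
by rewrite lastU in wU.
Qed.

Lemma admissable_partition_card_gt1 (T : finType) (M : {set T}) (P : {set {set T}}) k :
  partition P M -> #|M| = k.+1 -> admissable_seq k (map (fun B : {set T} => #|B|) (enum P)) ->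
  (1 < #|P|)%N.
Proof.
move=> partP cardM [_]; rewrite size_map sumnE big_map big_enum /=.
by rewrite -(card_partition partP) cardM addn1 -add2n leq_add2r cardE.
Qed.

Section AdmissableBlocks.

Variables (n : nat) (adj : rel 'I_n) (M : {set {set 'I_n}}) (P : {set {set {set 'I_n}}}).
Hypotheses (adj_simple : simple_graph adj) (matchM : matching adj M) (partP : partition P M).
Hypothesis gapP : forall B1 B2, B1 \in P -> B2 \in P -> B1 != B2 ->
  forall f g, f \in B1 -> g \in B2 -> gap adj f g.

Lemma block_matching B : B \in P -> matching adj B.
Proof.
move=> BP; apply: matchingS matchM.
by case/and3P: partP => /eqP <- _ _; apply: bigcup_sup.
Qed.

Lemma block_cover_even B : B \in P -> ~~ odd #|cover B|.
Proof. by move=> BP; rewrite (card_cover_matching adj_simple (block_matching BP)) oddM. Qed.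

Lemma block_cover_neq0 B : B \in P -> cover B != set0.
Proof.
move=> BP; rewrite -cards_eq0 (card_cover_matching adj_simple (block_matching BP)).
by rewrite muln_eq0 cards_eq0 /=; apply: contraTneq BP => ->; case/and3P: partP.
Qed.

Lemma block_cover_disjoint B1 B2 :
  B1 \in P -> B2 \in P -> B1 != B2 -> [disjoint cover B1 & cover B2].
Proof.
move=> B1P B2P neqB; rewrite -setI_eq0; apply/set0Pn => -[x].
rewrite inE => /andP[/bigcupP[f fB1 xf] /bigcupP[g gB2 xg]].
have [disjfg _] := gapP B1P B2P neqB fB1 gB2.
by rewrite (disjointFr disjfg xf) in xg.
Qed.

Lemma block_cover_closed B : cover M = [set: 'I_n] -> B \in P -> adj_closed adj (cover B).
Proof.
case/and3P: partP => /eqP coverP _ _ coverM BP x y xy /bigcupP[f fB xf].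
apply/negPn/negP => yB.
have /bigcupP[g gM yg] : y \in cover M by rewrite coverM inE.
move: gM; rewrite -coverP => /bigcupP[B' B'P gB'].
have neqB : B != B' by apply: contraNneq yB => ->; apply/bigcupP; exists g.
by have [_ /(_ x y xf yg)] := gapP BP B'P neqB fB gB'; rewrite xy.
Qed.

End AdmissableBlocks.

Theorem lemma5p9 (K : fieldType) (n : nat) (adj : rel 'I_n) (k : nat)
    (M : {set {set 'I_n}}) :
  simple_graph adj ->
  perfect_matching adj M ->
  #|M| = k.+1 ->
  admissable_matching adj k M ->
  ~ sc_connected (upper_koszul (squarefree_power_ideal K adj k)
                                (edge_monomial K M)).
Proof.
move=> adj_simple M_perfect cardM [P [partP [gapP [admP _]]]].
have [matchM coverM] := M_perfect.
have /card_gt1P[B1 [B2 [B1P B2P neqB]]] := admissable_partition_card_gt1 partP cardM admP.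
have /set0Pn[v vB1] := block_cover_neq0 adj_simple matchM partP B1P.
have /set0Pn[w wB2] := block_cover_neq0 adj_simple matchM partP B2P.
apply: (sc_disconnected (U := cover B1) (v := v) (w := w)) => //.
- move=> W x; apply: (face_sub_closed (K := K) adj_simple M_perfect cardM).
    exact: (block_cover_closed partP gapP coverM B1P).
  exact: (block_cover_even adj_simple matchM partP B1P).
- exact: face_vertex.
- exact: face_vertex.
by rewrite (disjointFl (block_cover_disjoint gapP B1P B2P neqB) wB2).
Qed.
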